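(* Let $\lambda^1,\dots,\lambda^m$ be partitions of total size $n$ and $0\le k_1<k_2<\dots<k_m$ distinct nonnegative integers. Then the irreducible representation $$\mathrm{Ind}_{(\mathbb{C}^\times\wr S_{|\lambda^1|})\times\dots\times(\mathbb{C}^\times\wr S_{|\lambda^m|})}^{\mathbb{C}^\times\wr S_n}\left(S^{\lambda^1,k_1}\otimes\dots\otimes S^{\lambda^m,k_m}\right)$$ of $T\rtimes S_n$ is polynomial (of degree $k_1|\lambda^1|+k_2|\lambda^2|+\dots+k_m|\lambda^m|$) if and only if either $k_1\neq 0$, or $k_1=0$ and $\lambda^1$ is a one-row partition.
   Context: Let $T\subset GL_n(\mathbb{C})$ be the diagonal torus and identify $S_n$ with the permutation matrices; $T\rtimes S_n\cong\mathbb{C}^\times\wr S_n$ is the group of monomial matrices. All representations are complex algebraic. For a partition $\lambda$ of $r$ and an integer $k$, $S^{\lambda,k}$ is the representation of $\mathbb{C}^\times\wr S_r$ on the Specht module $S^\lambda$ with each copy of $\mathbb{C}^\times$ acting by $z\mapsto z^k$; block-diagonal products $(\mathbb{C}^\times\wr S_{r_1})\times\dots\times(\mathbb{C}^\times\wr S_{r_m})$ are subgroups of $\mathbb{C}^\times\wr S_n$. Let $V=\mathbb{C}^n$ be the restriction to $T\rtimes S_n$ of the defining representation of $GL_n$. A representation of $T\rtimes S_n$ is called polynomial of degree $d$ if it is a direct summand of a direct sum of copies of $V^{\otimes d}$, and polynomial if it is a direct sum of polynomial representations of various degrees. *)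

From HB Require Import structures.
From mathcomp Require Import all_boot all_order all_algebra all_fingroup.
From mathcomp Require Import Rstruct complex.

Set Implicit Arguments.
Unset Strict Implicit.
Unset Printing Implicit Defensive.

Import Order.TTheory GRing.Theory Num.Theory.
Local Open Scope ring_scope.

(* The group T x| S_n of monomial n x n matrices is parametrized by    *)
(* pairs (t, s) with t : 'I_n -> F nowhere zero and s : {perm 'I_n}, the      *)
(* element being diag(t) * pmat s, where pmat s is the permutation      *)
(* matrix sending the basis vector e_j to e_(s j).                     *)

Section Generic.
Variable F : fieldType.

Definition monomx n (t : 'I_n -> F) (s : {perm 'I_n}) (i j : 'I_n) : F :=
  t i * (i == s j)%:R.

(* m copies of the tensor power V^{(x) d}, V = F^n, in coordinates:
   the vector u has coordinate u (c, w) on the basis vector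
   e_(w 0) (x) ... (x) e_(w (d-1)) of the c-th copy. *)
Definition tpow_copies (n d mc : nat) :=
  {ffun ('I_mc * {ffun 'I_d -> 'I_n}) -> F^o}.

Definition act_tpow n d mc (t : 'I_n -> F) (s : {perm 'I_n})
  (u : tpow_copies n d mc) : tpow_copies n d mc :=
  [ffun cw : 'I_mc * {ffun 'I_d -> 'I_n} =>
     \sum_(v : {ffun 'I_d -> 'I_n})
        (\prod_(q < d) monomx t s (cw.2 q) (v q)) * u (cw.1, v)].

Definition nowhere0 n (t : 'I_n -> F) := forall x, t x != 0.

(* W (a subspace of an ambient space V on which T x| S_n acts by act)
   is polynomial of degree d: it is (isomorphic to) a direct summand of
   a direct sum of mc copies of V^{(x) d}. *)
Definition is_poly_deg n (V : vectType F)
    (act : ('I_n -> F) -> {perm 'I_n} -> V -> V) (W : {vspace V}) (d : nat) :=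
  exists mc (iota : 'Hom(V, tpow_copies n d mc))
            (p : 'Hom(tpow_copies n d mc, V)),
    [/\ forall u, p u \in W,
        forall w, w \in W -> p (iota w) = w &
        forall t s, nowhere0 t ->
          (forall w, w \in W -> iota (act t s w) = act_tpow t s (iota w)) /\
          (forall u, p (act_tpow t s u) = act t s (p u))].

Definition is_poly n (V : vectType F)
    (act : ('I_n -> F) -> {perm 'I_n} -> V -> V) (W : {vspace V}) :=
  exists N (Ws : 'I_N -> {vspace V}) (ds : 'I_N -> nat),
    [/\ (\sum_(j < N) Ws j)%VS = W,
        directv (\sum_(j < N) Ws j) &
        forall j, (forall t s, nowhere0 t ->
                     forall w, w \in Ws j -> act t s w \in Ws j)
                  /\ is_poly_deg act (Ws j) (ds j)].

Definition is_partition (l : seq nat) :=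
  sorted geq l && all (fun x => 0 < x)%N l.

(* canonical tableau t0 of shape l: the numbers 0 .. |l|-1 filled in
   row by row; rowof / colof give the row / column of x in t0. *)
Definition rowof (l : seq nat) (x : nat) : nat :=
  count (fun j => sumn (take j.+1 l) <= x)%N (iota 0 (size l)).
Definition colof (l : seq nat) (x : nat) : nat :=
  x - sumn (take (rowof l x) l).

(* tabloids are encoded by their row function (number |-> row),
   rows being encoded in 'I_R.+1 for a bound R >= number of rows. *)
Definition tabl (R : nat) (l : seq nat) := {ffun 'I_(sumn l) -> 'I_R.+1}.
Definition permmod (R : nat) (l : seq nat) := {ffun tabl R l -> F^o}.

(* the tableau t_s puts the number s x in the box where t0 has x;
   polytab R l s is the polytabloid e_(t_s) = sum_(p in C_(t_s)) sgn p {p t_s}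
   where C_(t_s) is the column group of t_s. *)
Definition polytab (R : nat) (l : seq nat) (s : {perm 'I_(sumn l)}) : permmod R l :=
  let rowt : tabl R l := [ffun y => inord (rowof l (s^-1%g y))] in
  [ffun a : tabl R l =>
     \sum_(p : {perm 'I_(sumn l)} |
              [forall y, colof l (s^-1%g (p y)) == colof l (s^-1%g y)])
        (-1) ^+ p * (a == [ffun y => rowt (p^-1%g y)])%:R].

Definition specht (R : nat) (l : seq nat) : {vspace permmod R l} :=
  <<[seq @polytab R l s | s <- enum {perm 'I_(sumn l)}]>>%VS.

Section Induced.
Variables (m : nat) (lam : 'I_m.+1 -> seq nat) (k : 'I_m.+1 -> nat).

Definition bsize (i : 'I_m.+1) : nat := sumn (lam i).
Definition ntot : nat := (\sum_(i < m.+1) bsize i)%N.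

(* position x of 'I_ntot lies in the block blk x (blocks are consecutive,
   of sizes bsize 0, bsize 1, ...); tagnat.Rank i o is the o-th position
   of block i. *)
Definition blk (x : 'I_ntot) : 'I_m.+1 := @tagnat.sig1 m.+1 bsize x.
Definition bpos (i : 'I_m.+1) (o : 'I_(bsize i)) : 'I_ntot :=
  @tagnat.Rank m.+1 bsize i o.

(* the tensor product (x)_i M^(lam i) realised as functions on tuples of
   tabloids, a tuple being encoded by one global row function on 'I_ntot *)
Definition gtabl := {ffun 'I_ntot -> 'I_ntot.+1}.
Definition tensmod := {ffun gtabl -> F^o}.
Definition restr (a : gtabl) (i : 'I_m.+1) : tabl ntot (lam i) :=
  [ffun o => a (bpos o)].
Definition tens (f : forall i : 'I_m.+1, permmod ntot (lam i)) : tensmod :=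
  [ffun a => \prod_(i < m.+1) f i (restr a i)].

Definition Xspace : {vspace tensmod} :=
  <<[seq tens (fun i => tnth (vbasis (specht ntot (lam i))) (c i))
    | c : {dffun forall i : 'I_m.+1, 'I_(\dim (specht ntot (lam i)))}]>>%VS.

(* the subgroup H = prod_i (C^x wr S_(bsize i)): its permutations *)
Definition blockpres (b : {perm 'I_ntot}) := [forall x, blk (b x) == blk x].
Definition permact (b : {perm 'I_ntot}) (f : tensmod) : tensmod :=
  [ffun a : gtabl => f [ffun x => a (b x)]].
(* diag(t) acts on X by the scalar prod_x t_x ^ k_(blk x) *)
Definition torchar (t : 'I_ntot -> F) : F :=
  \prod_(x : 'I_ntot) t x ^+ k (blk x).

(* Ind_H^G X = { f : G -> X | f(h g) = h . f(g) }, (g . f)(y) = f(y g).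
   Since T <= H, f is determined by phi(s) := f(pmat s), s in S_n;
   we realise Ind as a subspace of the functions {perm 'I_n} -> tensmod. *)
Definition indamb := {ffun {perm 'I_ntot} -> tensmod}.

(* the element of Ind supported on H pmat s with value x at pmat s *)
Definition indvec (s : {perm 'I_ntot}) (x : tensmod) : indamb :=
  [ffun u : {perm 'I_ntot} => \sum_(b : {perm 'I_ntot} | blockpres b && (u == (s * b)%g))
                          permact b x].

Definition IndW : {vspace indamb} :=
  <<[seq indvec s x | s <- enum {perm 'I_ntot}, x <- vbasis Xspace]>>%VS.

(* action of g = diag(t) pmat p : (g . f)(pmat s) = f(pmat s . g)
   = f(diag(t o s^-1) pmat (s o p)) = torchar(t o s^-1) phi(s o p) *)
Definition actInd (t : 'I_ntot -> F) (p : {perm 'I_ntot}) (phi : indamb) : indamb :=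
  [ffun s : {perm 'I_ntot} => torchar (fun x => t (s^-1%g x)) *: phi (p * s)%g].

End Induced.
End Generic.

Definition CC : fieldType := (Rdefinitions.R)[i].

From HB Require Import structures.
From mathcomp Require Import all_boot all_order all_algebra all_fingroup.
From mathcomp Require Import Rstruct complex zify.

Set Implicit Arguments.
Unset Strict Implicit.
Unset Printing Implicit Defensive.
Import Order.TTheory GRing.Theory Num.Theory.
Local Open Scope ring_scope.

(* Let w0 be the word of length d = sum_i k_i |lam^i| in which every position of
   block i occurs k_i times.  An element phi of the induced module, viewed as a
   function on S_n, embeds equivariantly into copies of V^{(x) d} by putting
   phi(s) at the word s^-1 w0; averaging over H and over the stabiliser of w0
   gives an equivariant retraction, provided this stabiliser acts trivially on
   the H-translates of X.  As k_i > 0 for i > 1, the stabiliser only moves the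
   block of lam^1 (block [ord0] below); it is trivial if k_1 > 0 and acts
   trivially on the Specht module of a one-row lam^1.  Conversely, if k_1 = 0
   and lam^1 has two rows, the torus element equal to 2 on that block fixes a
   vector of the induced module on which a column transposition of lam^1 acts
   nontrivially; in a polynomial representation a vector fixed by that torus
   element only involves tensor words avoiding the block, so it would be fixed
   by the transposition. *)

Section TagNat.
Variables (N : nat) (p_ : 'I_N -> nat).

Lemma sig1_RankP (i : 'I_N) (s : 'I_(\sum_i p_ i)%N) :
  tagnat.sig1 s = i -> exists o : 'I_(p_ i), tagnat.Rank i o = s.
Proof.
move=> e; exists (cast_ord (congr1 p_ e) (tagnat.sig2 s)); apply/val_inj/eqP.
have := tagnat.eq_Rank (cast_ord (congr1 p_ e) (tagnat.sig2 s)) (tagnat.sig2 s).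
by rewrite tagnat.sig2K => ->; apply/andP; split; [rewrite e|].
Qed.

Lemma Rank_inj (i : 'I_N) : injective (@tagnat.Rank N p_ i).
Proof.
move=> o1 o2 /(congr1 val)/eqP; rewrite tagnat.eq_Rank eqxx /=.
by move/eqP/val_inj.
Qed.

Lemma card_sig1 (i : 'I_N) :
  #|[pred s : 'I_(\sum_i p_ i)%N | tagnat.sig1 s == i]| = p_ i.
Proof.
rewrite -[RHS](card_ord (p_ i)) -(card_imset _ (@Rank_inj i)).
apply: eq_card => s; rewrite inE; apply/eqP/imsetP => [/sig1_RankP [o <-]|[o _ ->]].
  by exists o.
exact: tagnat.Rank1K.
Qed.

End TagNat.

Section SpanInduction.
Variables (K : fieldType) (vT : vectType K) (P : vT -> Prop).
Hypotheses (P0 : P 0) (P_comb : forall a u v, P u -> P v -> P (a *: u + v)).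

Lemma span_ind (X : seq vT) : {in X, forall x, P x} -> forall v, v \in <<X>>%VS -> P v.
Proof.
move=> PX v /(@coord_span _ _ _ (in_tuple X)) ->; elim/big_ind: _ => //.
  by move=> x y Px Py; have := P_comb 1 Px Py; rewrite scale1r.
move=> i _; have := P_comb (coord (in_tuple X) i v) (PX _ (mem_nth 0 (ltn_ord i))) P0.
by rewrite addr0.
Qed.

Lemma vspace_ind (U : {vspace vT}) :
  {in vbasis U, forall x, P x} -> forall v, v \in U -> P v.
Proof. by move=> PU v; rewrite -{1}(span_basis (vbasisP U)); apply: span_ind. Qed.

End SpanInduction.

Section TensorPower.
Variables (K : fieldType) (n d mc : nat).

Lemma act_tpowE (t : 'I_n -> K) (s : {perm 'I_n}) (u : tpow_copies K n d mc) c w :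
  act_tpow t s u (c, w) = (\prod_(j < d) t (w j)) * u (c, [ffun j => s^-1%g (w j)]).
Proof.
rewrite ffunE /= (bigD1 [ffun j => s^-1%g (w j)]) //= [X in _ + X]big1 ?addr0.
  by congr (_ * _); apply: eq_bigr => j _; rewrite /monomx ffunE permKV eqxx mulr1.
move=> v v_neq; have [j v_j] : exists j, v j != [ffun j => s^-1%g (w j)] j.
  apply/existsP; rewrite -negb_forall; apply: contra v_neq => /forallP v_eq.
  by apply/eqP/ffunP => j; apply/eqP.
rewrite (bigD1 j) //= /monomx; case: eqP => [ej|]; last by rewrite mulr0 !mul0r.
by move: v_j; rewrite ffunE ej permK eqxx.
Qed.

(* Coordinates on words meeting P pick up a nontrivial power of z, so a
   torus-fixed vector is supported on words avoiding P, which sigma fixes. *)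
Lemma act_tpow_fix_perm (P : pred 'I_n) (z : K) (sigma : {perm 'I_n}) :
  (forall e, (0 < e)%N -> z ^+ e != 1) -> (forall x, ~~ P x -> sigma x = x) ->
  forall u : tpow_copies K n d mc,
  act_tpow (fun x => if P x then z else 1) 1 u = u ->
  act_tpow (fun _ => 1) sigma u = u.
Proof.
move=> z_pow sigma_fix u u_fix.
have u0 c (w : {ffun 'I_d -> 'I_n}) j : P (w j) -> u (c, w) = 0.
  move=> Pwj; move/ffunP: u_fix => /(_ (c, w)); rewrite act_tpowE.
  have -> : [ffun j => (1%g : {perm 'I_n})^-1%g (w j)] = w.
    by apply/ffunP => i; rewrite ffunE invg1 perm1.
  rewrite -big_mkcond /= prodr_const => e.
  have card_gt0 : (0 < #|[pred j | P (w j)]|)%N by apply/card_gt0P; exists j.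
  apply/eqP; move: (z_pow _ card_gt0); apply: contraR => u_neq0.
  by rewrite -subr_eq0 -(mulIr_eq0 _ (mulIf u_neq0)) mulrBl e mul1r subrr.
apply/ffunP => -[c w]; rewrite act_tpowE big1 // mul1r.
have [/existsP [j Pwj] | noP] := boolP [exists j, P (w j)].
  rewrite (u0 _ _ j Pwj) (u0 _ _ j) // ffunE; apply: contraT => notP.
  have := sigma_fix _ notP; rewrite permKV => e.
  by rewrite -e Pwj in notP.
congr (u (c, _)); apply/ffunP => j; rewrite ffunE.
have notP : ~~ P (w j) by apply: contra noP => Pwj; apply/existsP; exists j.
by rewrite -{1}(sigma_fix _ notP) permK.
Qed.

End TensorPower.

Lemma poly_deg_is_poly (K : fieldType) n (V : vectType K)
    (act : ('I_n -> K) -> {perm 'I_n} -> V -> V) (U : {vspace V}) d :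
  (forall t s, nowhere0 t -> {in U, forall u, act t s u \in U}) ->
  is_poly_deg act U d -> is_poly act U.
Proof.
move=> stable U_deg; exists 1%N, (fun _ => U), (fun _ => d); split => //.
- by rewrite big_ord1.
by apply/directv_sum_independent => us _ sum0 j _; rewrite big_ord1 in sum0; rewrite (ord1 j).
Qed.

Lemma directv_sum_fixed (K : fieldType) (vT : vectType K) (N : nat)
    (Ws : 'I_N -> {vspace vT}) (f : {linear vT -> vT}) (ws : 'I_N -> vT) :
  directv (\sum_(j < N) Ws j) -> (forall j, ws j \in Ws j) ->
  (forall j, {in Ws j, forall w, f w \in Ws j}) ->
  f (\sum_j ws j) = \sum_j ws j -> forall j, f (ws j) = ws j.
Proof.
move=> dir ws_in stable fix_sum j.
have := elimT directv_sum_unique dir (fun j => f (ws j)) ws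
  (fun j _ => stable j _ (ws_in j)) (fun j _ => ws_in j).
by rewrite -linear_sum fix_sum eqxx => /esym /forall_inP /(_ j isT) /eqP.
Qed.

Lemma pchar0_natr_eq1 (K : fieldType) : [pchar K] =i pred0 ->
  forall e, (e%:R == 1 :> K) = (e == 1)%N.
Proof.
move=> charK0 [|e]; first by rewrite eq_sym oner_eq0.
by rewrite -natr1 -subr_eq0 addrK ((pcharf0P K).1 charK0).
Qed.

Section Tableaux.
Local Open Scope nat_scope.

Lemma rowof_cons a l x :
  rowof (a :: l) x = if x < a then 0 else (rowof l (x - a)).+1.
Proof.
rewrite /rowof /= -add1n iotaDl count_map /= take0 /= addn0.
case: ltnP => hx.
  rewrite /= (eq_count (a2 := pred0)) ?count_pred0 // => j.
  by rewrite /= /preim /=; apply/negbTE; rewrite -ltnNge; lia.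
rewrite add1n; congr (_.+1); apply: eq_count => j; rewrite /= /preim /= add1n.
by apply/idP/idP; lia.
Qed.

Lemma colof_cons a l x :
  colof (a :: l) x = if x < a then x else colof l (x - a).
Proof.
by rewrite /colof rowof_cons; case: ltnP => hx /=; rewrite ?subn0 ?subnDA.
Qed.

Lemma rowof_colof_inj l x y : rowof l x = rowof l y -> colof l x = colof l y -> x = y.
Proof.
elim: l x y => [|a l IH] x y; first by rewrite /colof /= !subn0.
rewrite !rowof_cons !colof_cons.
by case: (ltnP x a) => hx; case: (ltnP y a) => hy //= [/IH e /e]; lia.
Qed.

Lemma rowof_le_size l x : rowof l x <= size l.
Proof. by rewrite /rowof (leq_trans (count_size _ _)) // size_iota. Qed.

Lemma size_le_sumn l : is_partition l -> size l <= sumn l.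
Proof.
case/andP => _; elim: l => [|a l IH] //= /andP[a_gt0 l_pos].
by rewrite -add1n leq_add // IH.
Qed.

Lemma first_column_two_rows l : is_partition l -> 2 <= size l ->
  [/\ 0 < head 0 l, head 0 l < sumn l, colof l 0 = 0 & colof l (head 0 l) = 0].
Proof.
case: l => [|a [|b l]] // /andP[_ /= /and3P[a_gt0 b_gt0 _]] _.
by split => //; [lia | rewrite colof_cons ltnn subnn colof_cons b_gt0].
Qed.

End Tableaux.

Section Specht.
Variables (K : fieldType) (R : nat) (l : seq nat).
Local Notation Sn := {perm 'I_(sumn l)}.

Definition row_tabloid : tabl R l := [ffun y : 'I_(sumn l) => inord (rowof l y)].

Definition col_stab (p : Sn) := [forall y, colof l (p y) == colof l y].

Lemma polytab1E (a : tabl R l) : polytab K R (1%g : Sn) a =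
  \sum_(p | col_stab p) (-1) ^+ p * (a == [ffun y => row_tabloid (p^-1%g y)])%:R.
Proof.
rewrite ffunE; apply: eq_big => [p | p _].
  by apply: eq_forallb => y; rewrite invg1 !perm1.
congr (_ * (a == _)%:R); apply/ffunP => y; rewrite !ffunE.
by rewrite invg1 perm1.
Qed.

Lemma polytab1_row_tabloid : (size l <= R)%N ->
  polytab K R (1%g : Sn) row_tabloid = 1.
Proof.
move=> size_le; rewrite polytab1E (bigD1 1%g) /=; last by apply/forallP => y; rewrite /= perm1.
rewrite odd_perm1 expr0 mul1r big1 ?addr0.
  suff -> : row_tabloid == [ffun y => row_tabloid ((1%g : Sn)^-1%g y)] by [].
  by apply/eqP/ffunP => y; rewrite [RHS]ffunE invg1 perm1.
move=> p /andP[/forallP same_col p_neq1].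
suff /negbTE -> : row_tabloid != [ffun y => row_tabloid (p^-1%g y)] by rewrite mulr0.
apply: contra p_neq1 => /eqP e; apply/eqP/permP => y; rewrite perm1.
have := congr1 (fun f : tabl R l => val (f (p y))) e; rewrite !ffunE permK /=.
rewrite !inordK ?ltnS ?(leq_trans (rowof_le_size _ _)) // => same_row.
exact/val_inj/(rowof_colof_inj same_row (eqP (same_col y))).
Qed.

Lemma polytab1_tperm (o1 o2 : 'I_(sumn l)) :
  o1 != o2 -> colof l o1 = colof l o2 -> forall r : tabl R l,
  polytab K R (1%g : Sn) [ffun y => r (tperm o1 o2 y)] = - polytab K R (1%g : Sn) r.
Proof.
move=> o12 same_col r; set tau := tperm o1 o2.
have col_tau z : colof l (tau z) = colof l z by rewrite /tau; case: tpermP => // ->.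
rewrite !polytab1E (reindex_inj (mulIg tau)) /= -sumrN.
apply: eq_big => [p | p _]; first by apply: eq_forallb => y; rewrite permM col_tau.
rewrite odd_permM odd_tperm o12 signr_addb mulrN1 mulNr; congr (- (_ * _)).
apply: (congr1 (fun b : bool => b%:R)).
apply/idP/idP => /eqP/ffunP e; apply/eqP/ffunP => y; have := e (tau y); rewrite !ffunE.
  by rewrite tpermK => ->; rewrite invMg tpermV permM tpermK.
by move=> ->; rewrite invMg tpermV permM.
Qed.

Lemma polytab_specht (s : Sn) : polytab K R s \in specht K R l.
Proof. by apply/memv_span/map_f; rewrite mem_enum. Qed.

Lemma specht_neq0 : (size l <= R)%N -> specht K R l != 0%VS.
Proof.
move=> size_le; apply/eqP => specht0.
have := polytab_specht 1; rewrite specht0 memv0 => /eqP polytab0.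
have := polytab1_row_tabloid size_le; rewrite polytab0 ffunE => /eqP.
by rewrite eq_sym oner_eq0.
Qed.

Lemma specht_not_tperm_invariant (o1 o2 : 'I_(sumn l)) :
  o1 != o2 -> colof l o1 = colof l o2 -> (size l <= R)%N -> 2 != 0 :> K ->
  exists2 f, f \in vbasis (specht K R l) &
    exists r : tabl R l, f [ffun y => r (tperm o1 o2 y)] != f r.
Proof.
move=> o12 same_col size_le two_neq0.
suff /hasP [f f_basis /existsP r_moved] : has (fun f : permmod K R l =>
    [exists r : tabl R l, f [ffun y => r (tperm o1 o2 y)] != f r]) (vbasis (specht K R l)).
  by exists f.
apply: contraT => /hasPn basis_inv.
have inv : forall f, f \in specht K R l ->
    forall r : tabl R l, f [ffun y => r (tperm o1 o2 y)] = f r.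
  apply: vspace_ind => [r | c u v u_inv v_inv r | f /basis_inv /existsPn f_inv r].
  - by rewrite !ffunE.
  - by rewrite !ffunE u_inv v_inv.
  exact/eqP/negbNE/f_inv.
have := inv _ (polytab_specht 1) row_tabloid.
rewrite polytab1_tperm // polytab1_row_tabloid // => e.
by move: two_neq0; rewrite -[2]/(1 *+ 2) mulr2n -{2}e subrr eqxx.
Qed.

End Specht.

Section SingleRow.
Variables (K : fieldType) (R : nat).

Lemma polytab_single_row r (s : {perm 'I_(sumn [:: r])}) :
  polytab K R s = [ffun a => (a == [ffun _ => ord0])%:R].
Proof.
have y_lt (y : 'I_(sumn [:: r])) : (y < r)%N by case: y => y /=; rewrite addn0.
have row0 (y : 'I_(sumn [:: r])) : rowof [:: r] y = 0%N by rewrite rowof_cons y_lt.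
have colE (y : 'I_(sumn [:: r])) : colof [:: r] y = y by rewrite colof_cons y_lt.
apply/ffunP => a; rewrite !ffunE (big_pred1 1%g) => [|p /=].
  rewrite odd_perm1 expr0 mul1r; congr (_%:R); congr (a == _).
  by apply/ffunP => y; rewrite !ffunE; apply/val_inj; rewrite /= row0 inordK.
apply/forallP/eqP => [same_col | ->]; last by move=> y; rewrite perm1.
apply/permP => y; have := same_col y; rewrite !colE perm1 => /eqP e.
exact/(perm_inj (s := s^-1%g))/val_inj.
Qed.

Lemma specht_single_row (l : seq nat) : size l = 1%N ->
  forall g, g \in specht K R l -> forall r1 r2 : tabl R l,
  (r1 == [ffun _ => ord0]) = (r2 == [ffun _ => ord0]) -> g r1 = g r2.
Proof.
case: l => [|r' [|]] // _; apply: span_ind => [r1 r2 _ | c u v u_eq v_eq r1 r2 e |].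
- by rewrite !ffunE.
- by rewrite !ffunE (u_eq _ _ e) (v_eq _ _ e).
by move=> g /mapP [s _ ->] r1 r2 e; rewrite polytab_single_row !ffunE e.
Qed.

End SingleRow.

Section Induced.
Variables (F : fieldType) (m : nat) (lam : 'I_m.+1 -> seq nat) (k : 'I_m.+1 -> nat).
Local Notation n := (ntot lam).
Local Notation G := {perm 'I_n}.
Local Notation bp := (@blockpres m lam).
Local Notation X := (Xspace F lam).
Local Notation W := (IndW F lam).
Local Notation tch := (@torchar F m lam k).

Lemma blk_bpos i (o : 'I_(bsize lam i)) : blk (bpos o) = i.
Proof. exact: tagnat.Rank1K. Qed.

Lemma permactM (b1 b2 : G) (f : tensmod F lam) :
  permact b1 (permact b2 f) = permact (b2 * b1) f.
Proof.
by apply/ffunP => a; rewrite !ffunE; congr (f _); apply/ffunP => x; rewrite !ffunE permM.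
Qed.

Lemma permact1 (f : tensmod F lam) : permact 1 f = f.
Proof.
by apply/ffunP => a; rewrite !ffunE; congr (f _); apply/ffunP => x; rewrite !ffunE perm1.
Qed.

Lemma permact_is_linear (b : G) : linear (@permact F m lam b).
Proof. by move=> c f g; apply/ffunP => a; rewrite !ffunE. Qed.

HB.instance Definition _ (b : G) :=
  GRing.isLinear.Build F _ _ _ (@permact F m lam b) (permact_is_linear b).

Lemma blockpresP (b : G) : reflect (forall x, blk (b x) = blk x) (bp b).
Proof. by apply: (iffP forallP) => H x; apply/eqP/H. Qed.

Lemma blockpres1 : bp 1.
Proof. by apply/blockpresP => x; rewrite perm1. Qed.

Lemma blockpresM (b1 b2 : G) : bp b1 -> bp b2 -> bp (b1 * b2).
Proof. by move=> /blockpresP h1 /blockpresP h2; apply/blockpresP => x; rewrite permM h2 h1. Qed.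

Lemma blockpresV (b : G) : bp b -> bp b^-1.
Proof. by move=> /blockpresP h; apply/blockpresP => x; rewrite -{2}(permKV b x) h. Qed.

Lemma blockpresMr (a b : G) : bp b -> bp (a * b) = bp a.
Proof.
move=> bp_b; apply/idP/idP => [bp_ab | bp_a]; last exact: blockpresM.
by rewrite -(mulgK b a) blockpresM ?blockpresV.
Qed.

Lemma blockpresMl (a b : G) : bp a -> bp (a * b) = bp b.
Proof.
move=> bp_a; apply/idP/idP => [bp_ab | bp_b]; last exact: blockpresM.
by rewrite -(mulKg a b) blockpresM ?blockpresV.
Qed.

Lemma eq_torchar (g1 g2 : 'I_n -> F) : g1 =1 g2 -> tch g1 = tch g2.
Proof. by move=> e; apply: eq_bigr => x _; rewrite e. Qed.

Lemma torchar_blockpres (b : G) (g : 'I_n -> F) : bp b -> tch (g \o b) = tch g.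
Proof.
move=> /blockpresP bp_b; rewrite /torchar [RHS](reindex_inj (@perm_inj _ b)) /=.
by apply: eq_bigr => x _; rewrite bp_b.
Qed.

Lemma indvecE (s u : G) (x : tensmod F lam) :
  indvec s x u = if bp (s^-1 * u) then permact (s^-1 * u) x else 0.
Proof.
rewrite ffunE; case: ifP => bp_su.
  rewrite (bigD1 (s^-1 * u)%g) /=; last by rewrite bp_su mulKVg eqxx.
  by rewrite big1 ?addr0 // => b /andP[/andP[_ /eqP ->]]; rewrite mulKg eqxx.
by apply: big1 => b /andP[bp_b /eqP e]; rewrite e mulKg bp_b in bp_su.
Qed.

Lemma indvec_is_linear (s : G) : linear (@indvec F m lam s).
Proof.
move=> c x y; apply/ffunP => u; rewrite indvecE [RHS]ffunE [in RHS]ffunE !indvecE.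
by case: ifP => _; rewrite ?linearP // scaler0 addr0.
Qed.

HB.instance Definition _ (s : G) :=
  GRing.isLinear.Build F _ _ _ (@indvec F m lam s) (indvec_is_linear s).

Lemma actInd_is_linear t (p : G) : linear (@actInd F m lam k t p).
Proof. by move=> c f g; apply/ffunP => s; rewrite !ffunE scalerDr !scalerA mulrC. Qed.

HB.instance Definition _ t (p : G) :=
  GRing.isLinear.Build F _ _ _ (@actInd F m lam k t p) (actInd_is_linear t p).

Lemma actInd_indvec t (q s : G) (x : tensmod F lam) :
  actInd k t q (indvec s x) = indvec (q^-1 * s) (tch (t \o (s^-1 * q)%g) *: x).
Proof.
apply/ffunP => u; rewrite ffunE !indvecE invMg invgK !mulgA.
case: ifP => bp_u; last by rewrite scaler0.
rewrite linearZ -[in RHS](torchar_blockpres _ (blockpresV bp_u)); congr (_ *: _).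
by apply: eq_torchar => y /=; rewrite -permM invMg mulgKV.
Qed.

Lemma indvec_permact (s b : G) (x : tensmod F lam) : bp b ->
  indvec s (permact b x) = indvec (s * b^-1) x.
Proof.
move=> bp_b; apply/ffunP => u; rewrite !indvecE permactM invMg invgK.
by rewrite -mulgA (blockpresMl _ bp_b).
Qed.

Definition HX : {vspace tensmod F lam} :=
  <<[seq permact b x | b <- [seq b <- enum G | bp b], x <- vbasis X]>>%VS.

Lemma permact_HX (b : G) (x : tensmod F lam) : bp b -> x \in X -> permact b x \in HX.
Proof.
move=> bp_b; move: x; apply: vspace_ind => [|c u v u_HX v_HX | x x_basis].
- by rewrite linear0 mem0v.
- by rewrite linearP memvD // memvZ.
apply/memv_span/(allpairs_f (fun s x => permact s x)) => //.
by rewrite mem_filter bp_b mem_enum.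
Qed.

Lemma indvec_IndW (s : G) (x : tensmod F lam) : x \in X -> indvec s x \in W.
Proof.
move: x; apply: vspace_ind => [|c u v u_W v_W | x x_basis].
- by rewrite linear0 mem0v.
- by rewrite linearP memvD // memvZ.
by apply/memv_span/(allpairs_f (fun s x => indvec s x)); rewrite ?mem_enum.
Qed.

Lemma indvec_HX_IndW (s : G) (z : tensmod F lam) : z \in HX -> indvec s z \in W.
Proof.
move: z; apply: span_ind => [|c u v u_W v_W | z].
- by rewrite linear0 mem0v.
- by rewrite linearP memvD // memvZ.
case/allpairsP => -[b x] [/=]; rewrite mem_filter => /andP[bp_b _] x_basis ->.
by rewrite indvec_permact // indvec_IndW // vbasis_mem.
Qed.

Lemma actInd_IndW t (q : G) (y : indamb F lam) : y \in W -> actInd k t q y \in W.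
Proof.
move: y; apply: span_ind => [|c u v u_W v_W | y].
- by rewrite linear0 mem0v.
- by rewrite linearP memvD // memvZ.
case/allpairsP => -[s x] [/= _ x_basis ->].
by rewrite actInd_indvec linearZ memvZ // indvec_IndW // vbasis_mem.
Qed.

Definition induced (y : indamb F lam) :=
  (forall s b, bp b -> y (s * b)%g = permact b (y s)) /\ (forall s, y s \in HX).

Lemma IndW_induced (y : indamb F lam) : y \in W -> induced y.
Proof.
move: y; apply: span_ind => [|c u v [u_eqv u_HX] [v_eqv v_HX] | y].
- by split=> [s b bp_b|s]; rewrite !ffunE ?linear0 ?mem0v.
- split=> [s b bp_b|s]; rewrite !ffunE; first by rewrite u_eqv // v_eqv // linearP.
  by rewrite memvD // memvZ.
case/allpairsP => -[s0 x] [/= _ x_basis ->]; split=> [s b bp_b|s]; rewrite !indvecE.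
  by rewrite mulgA blockpresMr //; case: ifP; rewrite ?linear0 // permactM.
by case: ifP => [bp_s|_]; rewrite ?mem0v // permact_HX // vbasis_mem.
Qed.

Definition Hset := [set b : G | bp b].

Lemma sum_indvec (y : indamb F lam) : induced y ->
  \sum_(s : G) indvec s (y s) = #|Hset|%:R *: y.
Proof.
move=> [y_eqv _]; apply/ffunP => u; rewrite sum_ffunE ffunE.
rewrite (eq_bigr (fun s => if bp (s^-1 * u)%g then y u else 0)); last first.
  by move=> s _; rewrite indvecE; case: ifP => // bp_su; rewrite -y_eqv // mulKVg.
have inj_u : injective (fun b : G => u * b^-1)%g by move=> b1 b2 /mulgI /invg_inj.
rewrite -big_mkcond /= (reindex_inj inj_u) /=.
rewrite (eq_bigl (fun b => b \in Hset)); last by move=> b; rewrite inE invMg invgK mulgKV.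
by rewrite sumr_const scaler_nat.
Qed.

End Induced.

Section BaseWord.
Variables (F : fieldType) (m : nat) (lam : 'I_m.+1 -> seq nat) (k : 'I_m.+1 -> nat).
Local Notation n := (ntot lam).
Local Notation G := {perm 'I_n}.
Local Notation bp := (@blockpres m lam).
Local Notation tch := (@torchar F m lam k).
Local Notation deg := (\sum_(i < m.+1) k i * sumn (lam i))%N.

Lemma sum_block_exponents : (\sum_(x < n) k (blk x))%N = deg.
Proof.
rewrite (partition_big (fun x : 'I_n => blk x) xpredT) //=; apply: eq_bigr => i _.
rewrite (eq_bigr (fun _ => k i)); last by move=> x /eqP ->.
by rewrite sum_nat_const mulnC (card_sig1 (bsize lam) i).
Qed.

(* The word in which each position x occurs k (blk x) times, in increasing order. *)
Definition base_word : {ffun 'I_deg -> 'I_n} :=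
  [ffun j => @tagnat.sig1 n (fun x => k (blk x)) (cast_ord (esym sum_block_exponents) j)].

Lemma torchar_base_word (g : 'I_n -> F) : tch g = \prod_(j < deg) g (base_word j).
Proof.
rewrite (reindex (cast_ord sum_block_exponents)) /=; last first.
  by exists (cast_ord (esym sum_block_exponents)) => j _; [apply: cast_ordK | apply: cast_ordKV].
rewrite (eq_bigr (fun j => g (@tagnat.sig1 n (fun x => k (blk x)) j))); last first.
  by move=> j _; rewrite ffunE cast_ordK.
rewrite (partition_big (fun j => @tagnat.sig1 n (fun x => k (blk x)) j) xpredT) //=.
apply: eq_bigr => x _; rewrite (eq_bigr (fun _ => g x)); last by move=> j /eqP ->.
by rewrite prodr_const (card_sig1 (fun x => k (blk x)) x).
Qed.

Lemma base_word_onto x : (0 < k (blk x))%N -> exists j, base_word j = x.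
Proof.
move=> k_gt0; exists (cast_ord sum_block_exponents (tagnat.Rank x (Ordinal k_gt0))).
by rewrite ffunE cast_ordK tagnat.Rank1K.
Qed.

Definition word_stab := [set sigma : G | [ffun j => sigma (base_word j)] == base_word].

Lemma word_stabP (sigma : G) :
  reflect (forall j, sigma (base_word j) = base_word j) (sigma \in word_stab).
Proof.
rewrite inE; apply: (iffP eqP) => [e j | fix_w]; first by move/ffunP: e => /(_ j); rewrite ffunE.
by apply/ffunP => j; rewrite ffunE fix_w.
Qed.

Lemma word_stabV (sigma : G) : sigma \in word_stab -> sigma^-1%g \in word_stab.
Proof. by move/word_stabP => fix_w; apply/word_stabP => j; rewrite -{1}(fix_w j) permK. Qed.

Section Embedding.
Hypothesis charF0 : [pchar F] =i pred0.
Hypothesis stab_acts_trivially :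
  forall sigma, sigma \in word_stab -> bp sigma /\ {in HX F lam, forall z, permact sigma z = z}.

Local Notation mc := #|gtabl lam|.
Local Notation TP := (tpow_copies F n deg mc).

Definition word_of (s : G) : {ffun 'I_deg -> 'I_n} := [ffun j => s^-1%g (base_word j)].

Definition embed (y : indamb F lam) : TP :=
  [ffun cw => \sum_(s : G) ((cw.2 == word_of s)%:R * y s (enum_val cw.1))].

Definition word_coord (s : G) (u : TP) : tensmod F lam :=
  [ffun a => u (enum_rank a, word_of s)].

Definition retract (u : TP) : indamb F lam :=
  ((#|Hset lam| * #|word_stab|)%:R)^-1 *:
    \sum_(s : G) indvec s (projv (HX F lam) (word_coord s u)).

Lemma embed_is_linear : linear embed.
Proof.
move=> a u v; apply/ffunP => cw; rewrite !ffunE scaler_sumr -big_split /=.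
by apply: eq_bigr => s _; rewrite !ffunE mulrDr scalerAr.
Qed.

HB.instance Definition _ := GRing.isLinear.Build F _ _ _ embed embed_is_linear.

Lemma word_coord_is_linear (s : G) : linear (word_coord s).
Proof. by move=> a u v; apply/ffunP => x; rewrite !ffunE. Qed.

HB.instance Definition _ (s : G) :=
  GRing.isLinear.Build F _ _ _ (word_coord s) (word_coord_is_linear s).

Lemma retract_is_linear : linear retract.
Proof.
move=> a u v; rewrite /retract (eq_bigr (fun s =>
    a *: indvec s (projv (HX F lam) (word_coord s u))
    + indvec s (projv (HX F lam) (word_coord s v)))); last by move=> s _; rewrite !linearP.
by rewrite big_split /= -scaler_sumr scalerDr !scalerA mulrC.
Qed.

HB.instance Definition _ := GRing.isLinear.Build F _ _ _ retract retract_is_linear.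

Lemma embed_actInd t (q : G) (y : indamb F lam) :
  embed (actInd k t q y) = act_tpow t q (embed y).
Proof.
apply/ffunP => -[c w]; rewrite act_tpowE !ffunE /= mulr_sumr.
rewrite (reindex_inj (mulgI q^-1%g)) /=; apply: eq_bigr => s _.
rewrite ffunE ffunE mulKVg.
have -> : (w == word_of (q^-1 * s)%g) = ([ffun j => q^-1%g (w j)] == word_of s).
  apply/eqP/eqP => [-> | /ffunP e]; apply/ffunP => j; rewrite !ffunE.
    by rewrite invMg invgK permM permK.
  by move: (e j); rewrite !ffunE invMg invgK permM => <-; rewrite permKV.
case: eqP => [/ffunP e | _]; last by rewrite !mul0r mulr0.
rewrite !mul1r; congr (_ * _); rewrite torchar_base_word; apply: eq_bigr => j _.
by move: (e j); rewrite !ffunE invMg invgK permM => <-; rewrite permKV.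
Qed.

Lemma word_coord_act t (q s : G) (u : TP) :
  word_coord s (act_tpow t q u) = tch (t \o s^-1%g) *: word_coord (q * s)%g u.
Proof.
apply/ffunP => a; rewrite ffunE act_tpowE [RHS]ffunE [word_coord _ _ _]ffunE.
rewrite torchar_base_word.
congr (_ * u (_, _)); first by apply: eq_bigr => j _; rewrite ffunE.
by apply/ffunP => j; rewrite !ffunE invMg permM.
Qed.

Lemma retract_act t (q : G) (u : TP) :
  retract (act_tpow t q u) = actInd k t q (retract u).
Proof.
rewrite /retract [RHS]linearZ /=; congr (_ *: _); rewrite linear_sum.
rewrite [RHS](reindex_inj (mulgI q)) /=; apply: eq_bigr => s _.
rewrite actInd_indvec mulKg word_coord_act !linearZ /=; congr (_ *: _).
by apply: eq_torchar => x; rewrite /= invMg mulgKV.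
Qed.

Lemma retract_IndW (u : TP) : retract u \in IndW F lam.
Proof.
rewrite memvZ // rpred_sum // => s _.
by rewrite indvec_HX_IndW // memv_proj.
Qed.

Lemma word_coord_embed (s : G) (y : indamb F lam) : induced y ->
  word_coord s (embed y) = #|word_stab|%:R *: y s.
Proof.
move=> [y_eqv y_HX]; apply/ffunP => a; rewrite !ffunE /= enum_rankK.
rewrite scaler_nat -sumr_const.
have inj_s : injective (fun sigma : G => s * sigma^-1)%g by move=> b1 b2 /mulgI /invg_inj.
rewrite (reindex_inj inj_s) /= [RHS]big_mkcond /=; apply: eq_bigr => sigma _.
have -> : (word_of s == word_of (s * sigma^-1)%g) = (sigma \in word_stab).
  apply/eqP/word_stabP => [/ffunP e j | fix_w].
    by move: (e j); rewrite !ffunE invMg invgK permM => /perm_inj.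
  by apply/ffunP => j; rewrite [LHS]ffunE [RHS]ffunE invMg invgK permM fix_w.
case: ifP => [stab_sigma|_]; last by rewrite mul0r.
have [bp_sigma sigma_fix] := stab_acts_trivially (word_stabV stab_sigma).
by rewrite mul1r y_eqv // sigma_fix // ffunE.
Qed.

Lemma retract_embed (y : indamb F lam) : y \in IndW F lam -> retract (embed y) = y.
Proof.
move=> /IndW_induced y_ind; rewrite /retract.
rewrite (eq_bigr (fun s => #|word_stab|%:R *: indvec s (y s))); last first.
  move=> s _; rewrite word_coord_embed // projv_id ?linearZ //.
  by rewrite memvZ //; case: y_ind => _ ->.
have card_neq0 (A : {set G}) : 1%g \in A -> #|A|%:R != 0 :> F.
  by move=> A1; rewrite ((pcharf0P F).1 charF0) -lt0n; apply/card_gt0P; exists 1%g.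
rewrite -scaler_sumr sum_indvec // !scalerA natrM invfM -!mulrA mulKf ?mulVf ?scale1r //.
  by apply: card_neq0; rewrite inE blockpres1.
by apply: card_neq0; apply/word_stabP => j; rewrite perm1.
Qed.

Lemma IndW_poly_deg : is_poly_deg (@actInd F m lam k) (IndW F lam) deg.
Proof.
exists mc, (linfun embed), (linfun retract); split.
- by move=> u; rewrite lfunE retract_IndW.
- by move=> w w_W; rewrite !lfunE /= retract_embed.
move=> t q _; split; first by move=> w _; rewrite !lfunE /= embed_actInd.
by move=> u; rewrite !lfunE /= retract_act.
Qed.

End Embedding.
End BaseWord.

Section FirstBlock.
Variables (F : fieldType) (m : nat) (lam : 'I_m.+1 -> seq nat) (k : 'I_m.+1 -> nat).
Local Notation n := (ntot lam).
Local Notation G := {perm 'I_n}.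
Local Notation bp := (@blockpres m lam).
Local Notation X := (Xspace F lam).

Definition supported_block0 (sigma : G) := forall x, blk x != ord0 -> sigma x = x.

Lemma supported_block0_blockpres (sigma : G) : supported_block0 sigma -> bp sigma.
Proof.
move=> supp; apply/blockpresP => x.
have [x0 | /supp -> //] := eqVneq (blk x) ord0.
have [sx0 | /supp sx] := eqVneq (blk (sigma x)) ord0; first by rewrite x0 sx0.
by rewrite (perm_inj sx).
Qed.

Definition block0_zero (a : gtabl lam) := [forall x, (blk x == ord0) ==> (a x == ord0)].

Lemma block0_zero_restr (a : gtabl lam) : block0_zero a = (restr a ord0 == [ffun _ => ord0]).
Proof.
apply/forallP/eqP => [a0 | /ffunP a0 x].
  by apply/ffunP => o; rewrite !ffunE; apply/eqP; have := a0 (bpos o); rewrite blk_bpos eqxx.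
apply/implyP => /eqP /sig1_RankP [o <-].
by move: (a0 o); rewrite !ffunE => ->.
Qed.

Lemma block0_zero_blockpres (b : G) (a : gtabl lam) :
  bp b -> block0_zero [ffun x => a (b x)] = block0_zero a.
Proof.
move=> /blockpresP bp_b; apply/forallP/forallP => a0 x; apply/implyP => x0.
  by have := implyP (a0 (b^-1 x)%g); rewrite ffunE permKV; apply; rewrite -bp_b permKV.
by rewrite ffunE; apply: (implyP (a0 (b x))); rewrite bp_b.
Qed.

(* For a one-row lam^1 the only tabloid of block 0 is the zero row function,
   so every element of X has this property. *)
Definition block0_insensitive (z : tensmod F lam) := forall a a' : gtabl lam,
  (forall x, blk x != ord0 -> a x = a' x) -> block0_zero a = block0_zero a' -> z a = z a'.

Lemma block0_insensitive_lin (c : F) (u v : tensmod F lam) :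
  block0_insensitive u -> block0_insensitive v -> block0_insensitive (c *: u + v).
Proof. by move=> u_ins v_ins a a' ea e0; rewrite !ffunE (u_ins _ _ ea e0) (v_ins _ _ ea e0). Qed.

Lemma block0_insensitive0 : block0_insensitive 0.
Proof. by move=> a a' _ _; rewrite !ffunE. Qed.

Lemma block0_insensitive_permact (b : G) (z : tensmod F lam) :
  bp b -> block0_insensitive z -> block0_insensitive (permact b z).
Proof.
move=> bp_b z_ins a a' ea e0; rewrite !ffunE; apply: z_ins.
  by move=> x x0; rewrite !ffunE ea //; move/blockpresP: bp_b => ->.
by rewrite !block0_zero_blockpres.
Qed.

Section SingleRowBlock.
Hypothesis single_row : size (lam ord0) = 1%N.

Lemma Xspace_block0_insensitive (x : tensmod F lam) : x \in X -> block0_insensitive x.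
Proof.
move: x; apply: span_ind; [exact: block0_insensitive0 | exact: block0_insensitive_lin |].
move=> x /mapP [c _ ->] a a' ea e0; rewrite !ffunE; apply: eq_bigr => i _.
have [-> | i0] := eqVneq i ord0.
  by apply: (specht_single_row single_row); rewrite ?vbasis_mem ?mem_tnth // -!block0_zero_restr.
by congr (_ _); apply/ffunP => o; rewrite !ffunE ea // blk_bpos.
Qed.

Lemma HX_block0_insensitive (z : tensmod F lam) : z \in HX F lam -> block0_insensitive z.
Proof.
move: z; apply: span_ind; [exact: block0_insensitive0 | exact: block0_insensitive_lin |].
move=> z /allpairsP [[b x] [/=]]; rewrite mem_filter => /andP[bp_b _] x_basis ->.
by apply: block0_insensitive_permact => //; apply/Xspace_block0_insensitive/vbasis_mem.
Qed.

End SingleRowBlock.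

(* With increasing k, only block 0 can have exponent 0, so the stabiliser of the
   base word is supported in block 0, and is trivial unless k_1 = 0. *)
Lemma word_stab_trivial :
  (forall i j : 'I_m.+1, (i < j)%N -> (k i < k j)%N) ->
  k ord0 <> 0%N \/ (k ord0 = 0%N /\ size (lam ord0) = 1%N) ->
  forall sigma, sigma \in word_stab lam k ->
  bp sigma /\ {in HX F lam, forall z, permact sigma z = z}.
Proof.
move=> k_incr cond sigma /word_stabP stab.
have fix_pos x : (0 < k (blk x))%N -> sigma x = x by move=> /base_word_onto [j <-].
have k_gt0 x : blk x != ord0 -> (0 < k (blk x))%N.
  move=> x0; apply: leq_trans (k_incr ord0 (blk x) _) => //.
  by rewrite lt0n; apply: contra x0 => /eqP blk0; apply/eqP/val_inj.
have supp : supported_block0 sigma by move=> x /k_gt0 /fix_pos.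
split; first exact: supported_block0_blockpres.
case: cond => [k0_neq0 | [_ single_row]] z z_HX.
  suff -> : sigma = 1%g by rewrite permact1.
  apply/permP => x; rewrite perm1; apply: fix_pos.
  by have [-> | /k_gt0 //] := eqVneq (blk x) ord0; rewrite lt0n; apply/eqP.
apply/ffunP => a; rewrite ffunE; apply: (HX_block0_insensitive single_row z_HX).
  by move=> x x0; rewrite ffunE supp.
by rewrite block0_zero_blockpres // supported_block0_blockpres.
Qed.

End FirstBlock.

Section NotPolynomial.
Variables (F : fieldType) (m : nat) (lam : 'I_m.+1 -> seq nat) (k : 'I_m.+1 -> nat).
Hypothesis charF0 : [pchar F] =i pred0.
Local Notation n := (ntot lam).
Local Notation G := {perm 'I_n}.
Local Notation X := (Xspace F lam).
Local Notation W := (IndW F lam).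
Local Notation tch := (@torchar F m lam k).
Local Notation supported := (@supported_block0 m lam).

Definition torus_block0 : 'I_n -> F := fun x => if blk x == ord0 then 2 else 1.

Lemma torus_block0_nowhere0 : nowhere0 torus_block0.
Proof.
by move=> x; rewrite /torus_block0; case: ifP => _; rewrite ?oner_eq0 // ((pcharf0P F).1 charF0).
Qed.

Lemma poly_deg_fix_supported (Wj : {vspace indamb F lam}) dj (sigma : G) :
  is_poly_deg (actInd k) Wj dj -> supported sigma ->
  {in Wj, forall w, actInd k torus_block0 1%g w = w -> actInd k (fun _ => 1) sigma w = w}.
Proof.
move=> [mc [io [p [p_in p_io act_eqv]]]] supp w w_in w_fix.
have io_fix := (act_eqv _ 1%g torus_block0_nowhere0).1 w w_in; rewrite w_fix in io_fix.
have two_pow e : (0 < e)%N -> (2 : F) ^+ e != 1.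
  by move=> e_gt0; rewrite -natrX pchar0_natr_eq1 // neq_ltn (ltn_exp2l 0) // e_gt0 orbT.
have io_perm_fix := act_tpow_fix_perm two_pow (fun x => @supp x) (esym io_fix).
have one_nowhere0 : nowhere0 (fun _ : 'I_n => 1 : F) by move=> x; rewrite oner_eq0.
by rewrite -[in RHS](p_io w w_in) -[in RHS]io_perm_fix (act_eqv _ _ one_nowhere0).2 p_io.
Qed.

Lemma torchar1 : tch (fun _ => 1) = 1.
Proof. by apply: big1 => x _; rewrite expr1n. Qed.

(* If k_1 = 0, the vector of Ind supported on H with value x is fixed by the torus
   element 2 on block 0; in a polynomial representation it is then fixed by every
   permutation supported in block 0. *)
Lemma IndW_not_poly (sigma : G) (x : tensmod F lam) :
  k ord0 = 0%N -> supported sigma -> x \in X -> permact sigma^-1 x != x ->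
  ~ is_poly (actInd k) W.
Proof.
move=> k0 supp x_X moved [N [Ws [ds [sumW dir Ws_poly]]]].
have torus_fix : actInd k torus_block0 1%g (indvec 1 x) = indvec 1 x.
  rewrite actInd_indvec invg1 mulg1; set c := tch _; suff -> : c = 1 by rewrite scale1r.
  by apply: big1 => y _; rewrite /= perm1 /torus_block0; case: eqP => [->|_]; rewrite ?k0 ?expr1n.
have := indvec_IndW 1 x_X; rewrite -sumW => /memv_sumP [ws ws_in ws_sum].
have comp_fix j : actInd k torus_block0 1%g (ws j) = ws j.
  apply: (directv_sum_fixed dir (fun j => ws_in j isT)) => // [i w w_in|].
    exact: (Ws_poly i).1 _ _ torus_block0_nowhere0 _ w_in.
  by rewrite -ws_sum.
have : actInd k (fun _ => 1) sigma (indvec 1 x) = indvec 1 x.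
  rewrite ws_sum linear_sum; apply: eq_bigr => j _.
  exact: (poly_deg_fix_supported (Ws_poly j).2 supp (ws_in j isT) (comp_fix j)).
move/ffunP => /(_ sigma^-1%g); rewrite ffunE mulgV !indvecE invg1 !mul1g blockpres1 permact1.
rewrite blockpresV ?supported_block0_blockpres // => e.
by move: moved; rewrite -e torchar1 scale1r eqxx.
Qed.

End NotPolynomial.

Section MovedVector.
Variables (F : fieldType) (m : nat) (lam : 'I_m.+1 -> seq nat).
Local Notation n := (ntot lam).
Local Notation G := {perm 'I_n}.
Local Notation X := (Xspace F lam).
Local Notation supported := (@supported_block0 m lam).

Definition ext (rr : forall i, tabl n (lam i)) : gtabl lam :=
  [ffun x => rr (blk x) (tagnat.sig2 x)].

Lemma restr_ext rr i : restr (ext rr) i = rr i.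
Proof.
apply/ffunP => o; rewrite !ffunE.
by rewrite /blk /tagnat.sig1 /tagnat.sig2 /bpos /tagnat.Rank tagnat.rankK.
Qed.

Lemma restr_onto i (r : tabl n (lam i)) : exists a : gtabl lam, restr a i = r.
Proof.
exists [ffun x => if [pick o | bpos o == x] is Some o then r o else ord0].
apply/ffunP => o; rewrite !ffunE; case: pickP => [o' /eqP /Rank_inj -> // | /(_ o)].
by rewrite eqxx.
Qed.

Lemma permact_tens_moved (sigma : G) (f : forall i, permmod F n (lam i)) :
  supported sigma -> (forall i, i != ord0 -> f i != 0) ->
  (exists a : gtabl lam, f ord0 (restr [ffun x => a (sigma x)] ord0) != f ord0 (restr a ord0)) ->
  permact sigma (tens f) != tens f.
Proof.
move=> supp f_neq0 [a0 a0_moved].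
have [rr rr_neq0] : exists rr : forall i, tabl n (lam i), forall i, i != ord0 -> f i (rr i) != 0.
  exists (fun i => odflt (row_tabloid n (lam i)) [pick r | f i r != 0]) => i i0.
  case: pickP => // none; case/negP: (f_neq0 i i0).
  by apply/eqP/ffunP => r; rewrite ffunE; apply/eqP/negbFE/none.
have /blockpresP sigma_bp := supported_block0_blockpres supp.
pose a : gtabl lam := [ffun x => if blk x == ord0 then a0 x else ext rr x].
have a_block0 x : blk x = ord0 -> a x = a0 x by move=> x0; rewrite ffunE x0 eqxx.
have a_other x : blk x != ord0 -> a x = ext rr x by move=> x0; rewrite ffunE (negbTE x0).
have restr_a0 : restr a ord0 = restr a0 ord0.
  by apply/ffunP => o; rewrite ![restr _ ord0 o]ffunE a_block0 // blk_bpos.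
have restr_sigma0 : restr [ffun x => a (sigma x)] ord0 = restr [ffun x => a0 (sigma x)] ord0.
  apply/ffunP => o; rewrite ![restr _ ord0 o]ffunE [LHS]ffunE [RHS]ffunE.
  by rewrite a_block0 // sigma_bp blk_bpos.
have restr_a i : i != ord0 -> restr a i = rr i.
  move=> i0; rewrite -(restr_ext rr i); apply/ffunP => o.
  by rewrite ![restr _ i o]ffunE a_other // blk_bpos.
have restr_sigma i : i != ord0 -> restr [ffun x => a (sigma x)] i = restr a i.
  by move=> i0; apply/ffunP => o; rewrite !ffunE supp // blk_bpos.
have prod_neq0 : \prod_(i | i != ord0) f i (rr i) != 0 by apply/prodf_neq0.
apply/negP => /eqP /ffunP /(_ a); rewrite [permact _ _ _]ffunE ![tens _ _]ffunE.
rewrite (bigD1 ord0) // [RHS](bigD1 ord0) //= restr_sigma0 restr_a0.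
rewrite (eq_bigr (fun i => f i (rr i))) => [|i i0]; last by rewrite restr_sigma // restr_a.
rewrite [in RHS](eq_bigr (fun i => f i (rr i))) => [|i i0]; last by rewrite restr_a.
by move/(mulIf prod_neq0)/eqP; apply/negP.
Qed.

Lemma exists_Xspace_moved (sigma : G) (tau : {perm 'I_(bsize lam ord0)}) :
  supported sigma -> (forall o, sigma (bpos o) = bpos (tau o)) ->
  (forall i, size (lam i) <= n)%N ->
  (exists2 f0, f0 \in vbasis (specht F n (lam ord0)) &
     exists r : tabl n (lam ord0), f0 [ffun o => r (tau o)] != f0 r) ->
  exists2 x, x \in X & permact sigma x != x.
Proof.
move=> supp sigma_bpos size_le [f0 f0_basis [r r_moved]].
pose moved i (g : permmod F n (lam i)) :=
  [exists a : gtabl lam, g (restr [ffun x => a (sigma x)] i) != g (restr a i)].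
have dim_gt0 i : (0 < \dim (specht F n (lam i)))%N by rewrite lt0n dimv_eq0 specht_neq0.
pose c : {dffun forall i : 'I_m.+1, 'I_(\dim (specht F n (lam i)))} :=
  [ffun i => odflt (Ordinal (dim_gt0 i))
     [pick j | (i == ord0) && moved i (tnth (vbasis (specht F n (lam i))) j)]].
exists (tens (fun i => tnth (vbasis (specht F n (lam i))) (c i))).
  by apply/memv_span/map_f; rewrite mem_enum.
apply: permact_tens_moved => // [i _ |].
  exact: free_not0 (basis_free (vbasisP _)) (mem_tnth _ _).
suff /existsP : moved ord0 (tnth (vbasis (specht F n (lam ord0))) (c ord0)) by [].
have moved0 : moved ord0 f0.
  have [a ra] := restr_onto r; apply/existsP; exists a.
  suff -> : restr [ffun x => a (sigma x)] ord0 = [ffun o => r (tau o)] by rewrite ra.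
  by apply/ffunP => o; rewrite !ffunE sigma_bpos -ra ffunE.
have /tnthP [j0 f0E] := f0_basis.
rewrite ffunE; case: pickP => [j /andP[_ //] | none].
by have := none j0; rewrite eqxx -f0E moved0.
Qed.

(* The transposition of the first two boxes of the first column of lam^1. *)
Lemma exists_block0_perm_moving : (forall i, is_partition (lam i)) ->
  (2 <= size (lam ord0))%N -> [pchar F] =i pred0 ->
  exists sigma : G, supported sigma /\ exists2 x, x \in X & permact sigma^-1 x != x.
Proof.
move=> part two_rows charF0.
have [h_gt0 h_lt col0 colh] := first_column_two_rows (part ord0) two_rows.
pose o1 : 'I_(bsize lam ord0) := Ordinal (ltn_trans h_gt0 h_lt).
pose o2 : 'I_(bsize lam ord0) := Ordinal h_lt.
have o12 : o1 != o2 by rewrite -val_eqE /= neq_ltn h_gt0.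
have supp : supported (tperm (bpos o1) (bpos o2)).
  by move=> x x0; rewrite tpermD //; apply: contra x0 => /eqP <-; rewrite blk_bpos.
exists (tperm (bpos o1) (bpos o2)); split => //; rewrite tpermV.
have size_le i : (size (lam i) <= n)%N.
  by apply: leq_trans (size_le_sumn (part i)) _; rewrite /ntot (bigD1 i) //= leq_addr.
apply: (exists_Xspace_moved (tau := tperm o1 o2)) => //.
  move=> o; case: (tpermP o1 o2 o) => [-> | -> | o1o o2o]; rewrite ?tpermL ?tpermR //.
  by rewrite tpermD //; apply/eqP => /Rank_inj e; [apply: o1o | apply: o2o].
apply: (specht_not_tperm_invariant o12 _ (size_le ord0)); first by rewrite /o1 /o2 /= col0 colh.
by rewrite ((pcharf0P F).1 charF0).
Qed.

End MovedVector.

Theorem proposition2p2 (m : nat) (lam : 'I_m.+1 -> seq nat)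
    (k : 'I_m.+1 -> nat) :
  (forall i, is_partition (lam i)) ->
  (forall i, (0 < sumn (lam i))%N) ->
  (forall i j : 'I_m.+1, (i < j)%N -> (k i < k j)%N) ->
  (is_poly (@actInd CC m lam k) (IndW CC lam) <->
     (k ord0 <> 0%N \/ (k ord0 = 0%N /\ size (lam ord0) = 1%N))) /\
  ((k ord0 <> 0%N \/ (k ord0 = 0%N /\ size (lam ord0) = 1%N)) ->
     is_poly_deg (@actInd CC m lam k) (IndW CC lam)
       (\sum_(i < m.+1) k i * sumn (lam i))%N).
Proof.
move=> part pos k_incr.
have charCC : [pchar CC] =i pred0 := pchar_num _.
have deg cond := IndW_poly_deg charCC (@word_stab_trivial CC m lam k k_incr cond).
split=> //; split=> [poly | cond]; last first.
  by apply: poly_deg_is_poly (deg cond) => t s _ w; apply: actInd_IndW.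
have [k0 | k0] := eqVneq (k ord0) 0%N; last by left; apply/eqP.
right; split=> //; have [size_lt1 | two_rows | //] := ltngtP (size (lam ord0)) 1.
  by move: (pos ord0) size_lt1; rewrite ltnS leqn0 size_eq0 => + /eqP lam0; rewrite lam0.
have [sigma [supp [x x_X moved]]] := exists_block0_perm_moving part two_rows charCC.
by case: (IndW_not_poly charCC k0 supp x_X moved poly).
Qed.
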